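(* For every positive integer $t$, $M(t)=SM(t)$ and $OM(t)\leq M(t)\leq OM(2t)$.
   Context: A signed graph $(G,\sigma)$ is a graph (loops and parallel edges allowed) with a signature $\sigma:E(G)\to\{+,-\}$. Switching at a vertex multiplies the signs of all incident edges by $-$. A signed graph $(H,\pi)$ is a minor of $(G,\sigma)$ if it is obtained by a sequence of vertex deletions, edge deletions, contractions of positive edges, and switchings. A signed graph is balanced if it has no negative cycle (sign of a cycle = product of its edge signs); a vertex set is balanced if it induces a balanced subgraph. A balanced $k$-coloring is a partition (or cover) of the vertex set into $k$ balanced sets, and the balanced chromatic number $\chi_b(\hat G)$ is the minimum such $k$ (finite iff $\hat G$ has no negative loop). For a graph $G$, $\tilde G$ denotes the signed graph obtained by replacing every edge with a positive and a negative parallel edge, and $(G,-)$ denotes $G$ with all edges negative. $M(t)$ is the largest $k$ such that every graph of chromatic number at least $t$ contains $K_k$ as a minor. $SM(t)$ is the largest $k$ such that every signed graph with no negative loop and $\chi_b\geq t$ contains $\tilde K_k$ as a minor. $OM(t)$ is the largest $k$ such that for every graph $G$ with $\chi(G)\geq t$, the signed graph $(G,-)$ contains $(K_k,-)$ as a minor. *)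

From mathcomp Require Import all_boot.
Set Implicit Arguments. Unset Strict Implicit. Unset Printing Implicit Defensive.

Record mgraph := MGraph {
  gV : finType;
  gE : finType;
  gsrc : gE -> gV;
  gtgt : gE -> gV }.

Definition joins (G : mgraph) (e : gE G) (x y : gV G) : bool :=
  ((gsrc e == x) && (gtgt e == y)) || ((gsrc e == y) && (gtgt e == x)).

Definition loopless (G : mgraph) : Prop := forall e : gE G, gsrc e != gtgt e.

Lemma andb_left (a b : bool) : a && b -> a. Proof. by case/andP. Qed.
Lemma andb_right (a b : bool) : a && b -> b. Proof. by case/andP. Qed.

Definition delv (G : mgraph) (v : gV G) : mgraph :=
  @MGraph {x : gV G | x != v}
          {e : gE G | (gsrc e != v) && (gtgt e != v)}
          (fun e => exist _ (gsrc (sval e)) (andb_left (proj2_sig e)))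
          (fun e => exist _ (gtgt (sval e)) (andb_right (proj2_sig e))).

Definition dele (G : mgraph) (f : gE G) : mgraph :=
  @MGraph (gV G) {e : gE G | e != f}
          (fun e => gsrc (sval e)) (fun e => gtgt (sval e)).

(* contraction of the edge f: tgt f is merged into src f, f is removed,
   edges parallel to f become loops.  If f is a loop this is just deleting f. *)
Definition con_V (G : mgraph) (f : gE G) :=
  {x : gV G | (x != gtgt f) || (gsrc f == gtgt f)}.

Lemma con_map_proof (G : mgraph) (f : gE G) (x : gV G) :
  let y := if x == gtgt f then gsrc f else x in
  (y != gtgt f) || (gsrc f == gtgt f).
Proof.
rewrite /=; case: (x =P gtgt f) => [_|/eqP h]; last by rewrite h.
by case: (gsrc f == gtgt f).
Qed.

Definition con_map (G : mgraph) (f : gE G) (x : gV G) : con_V f :=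
  exist _ (if x == gtgt f then gsrc f else x) (con_map_proof f x).

Definition contr (G : mgraph) (f : gE G) : mgraph :=
  @MGraph (con_V f) {e : gE G | e != f}
          (fun e => con_map f (gsrc (sval e))) (fun e => con_map f (gtgt (sval e))).

Definition miso (G H : mgraph) : Prop :=
  exists (phi : gV G -> gV H) (psi : gE G -> gE H),
    [/\ bijective phi, bijective psi &
        forall e, joins (psi e) (phi (gsrc e)) (phi (gtgt e))].

Inductive mstep (G : mgraph) : mgraph -> Prop :=
| MS_delv (v : gV G) : mstep G (delv v)
| MS_dele (e : gE G) : mstep G (dele e)
| MS_contr (e : gE G) : mstep G (contr e).

Inductive mreach : mgraph -> mgraph -> Prop :=
| MR_refl G : mreach G G
| MR_step G G' G'' : mstep G G' -> mreach G' G'' -> mreach G G''.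

Definition mminor (H G : mgraph) : Prop := exists G', mreach G G' /\ miso G' H.

Definition colorable (G : mgraph) (k : nat) : Prop :=
  exists c : gV G -> 'I_k, forall e : gE G, c (gsrc e) != c (gtgt e).
Definition chi_ge (G : mgraph) (t : nat) : Prop :=
  forall k, colorable G k -> t <= k.

Definition K (k : nat) : mgraph :=
  @MGraph 'I_k {p : 'I_k * 'I_k | p.1 < p.2}
          (fun p => (sval p).1) (fun p => (sval p).2).

Record sgraph := SGraph { ug : mgraph; sneg : gE ug -> bool }.

Definition sdelv (G : sgraph) (v : gV (ug G)) : sgraph :=
  @SGraph (delv v) (fun e => sneg (sval e)).
Definition sdele (G : sgraph) (f : gE (ug G)) : sgraph :=
  @SGraph (dele f) (fun e => sneg (sval e)).
Definition scontr (G : sgraph) (f : gE (ug G)) : sgraph :=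
  @SGraph (contr f) (fun e => sneg (sval e)).
(* switching at v: the sign of every edge with exactly one end at v is
   flipped (a loop at v meets v twice, so its sign is unchanged) *)
Definition sswitch (G : sgraph) (v : gV (ug G)) : sgraph :=
  @SGraph (ug G) (fun e => sneg e (+) ((gsrc e == v) (+) (gtgt e == v))).

Definition siso (G H : sgraph) : Prop :=
  exists (phi : gV (ug G) -> gV (ug H)) (psi : gE (ug G) -> gE (ug H)),
    [/\ bijective phi, bijective psi,
        forall e, joins (psi e) (phi (gsrc e)) (phi (gtgt e)) &
        forall e, sneg (psi e) = sneg e].

Inductive sstep (G : sgraph) : sgraph -> Prop :=
| SS_delv (v : gV (ug G)) : sstep G (sdelv v)
| SS_dele (e : gE (ug G)) : sstep G (sdele e)
| SS_contr (e : gE (ug G)) : ~~ sneg e -> sstep G (scontr e)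
| SS_switch (v : gV (ug G)) : sstep G (sswitch v).

Inductive sreach : sgraph -> sgraph -> Prop :=
| SR_refl G : sreach G G
| SR_step G G' G'' : sstep G G' -> sreach G' G'' -> sreach G G''.

Definition sminor (H G : sgraph) : Prop := exists G', sreach G G' /\ siso G' H.

(* cycles: a nonempty sequence [(v0,e0);...;(v_{n-1},e_{n-1})] of distinct
   vertices and distinct edges, e_i joining v_i and v_{i+1 mod n}
   (n = 1: a loop; n = 2: two parallel edges) *)
Definition gcycle (G : mgraph) (s : seq (gV G * gE G)) : bool :=
  [&& 0 < size s, uniq (map fst s), uniq (map snd s) &
      all (fun p => joins p.1.2 p.1.1 p.2.1) (zip s (rot 1 s))].

Definition neg_cycle (G : sgraph) (s : seq (gV (ug G) * gE (ug G))) : bool :=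
  odd (count (fun p => sneg p.2) s).

Definition balanced_set (G : sgraph) (U : pred (gV (ug G))) : Prop :=
  forall s, gcycle s -> all (fun p => U p.1) s -> ~~ neg_cycle s.

Definition no_neg_loop (G : sgraph) : Prop :=
  forall e : gE (ug G), gsrc e == gtgt e -> ~~ sneg e.

Definition bcolorable (G : sgraph) (k : nat) : Prop :=
  exists c : gV (ug G) -> 'I_k,
    forall i : 'I_k, balanced_set (fun x => c x == i).
Definition chib_ge (G : sgraph) (t : nat) : Prop :=
  forall k, bcolorable G k -> t <= k.

(* G~ : every edge replaced by a positive and a negative parallel edge *)
Definition tilde (G : mgraph) : sgraph :=
  @SGraph (@MGraph (gV G) (gE G * bool)%type
                   (fun p => gsrc p.1) (fun p => gtgt p.1)) (fun p => p.2).
Definition allneg (G : mgraph) : sgraph := @SGraph G (fun _ => true).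

Definition is_max (P : nat -> Prop) (m : nat) : Prop :=
  P m /\ forall k, P k -> k <= m.

Definition PM (t k : nat) : Prop :=
  forall G : mgraph, loopless G -> chi_ge G t -> mminor (K k) G.
Definition PSM (t k : nat) : Prop :=
  forall G : sgraph, no_neg_loop G -> chib_ge G t -> sminor (tilde (K k)) G.
Definition POM (t k : nat) : Prop :=
  forall G : mgraph, loopless G -> chi_ge G t ->
    sminor (allneg (K k)) (allneg G).

(* A signed graph without negative loops can be simplified without lowering its
   balanced chromatic number: delete positive loops and one of two parallel edges
   of the same sign, and contract, after switching, an edge having no parallel edge
   of the opposite sign.  When nothing applies, the graph is tilde U for the
   loopless graph U of its positive edges, a proper colouring of U is a balanced
   colouring of the signed graph, and a K_m minor of U lifts to a tilde K_m minor:
   SM(t) >= M(t).  For (G,-), a balanced k-colouring together with a switching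
   making each class positive yields a proper 2k-colouring of G, and deleting the
   positive edges of tilde K_m leaves (K_m,-): OM(2t) >= M(t).  Conversely
   chi_b(tilde G) = chi(G), and forgetting signs turns minors of tilde G or of (G,-)
   into minors of G (up to loops and parallel edges), so SM(t) <= M(t) and
   OM(t) <= M(t). *)

From mathcomp Require Import all_boot.
From Stdlib Require Import Classical.
Set Implicit Arguments. Unset Strict Implicit. Unset Printing Implicit Defensive.

Lemma joinsP (G : mgraph) (e : gE G) x y : joins e x y ->
  (gsrc e = x /\ gtgt e = y) \/ (gsrc e = y /\ gtgt e = x).
Proof. by case/orP => /andP [/eqP -> /eqP ->]; [left|right]. Qed.

Lemma joins_refl (G : mgraph) (e : gE G) : joins e (gsrc e) (gtgt e).
Proof. by rewrite /joins !eqxx. Qed.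

Lemma joinsC (G : mgraph) (e : gE G) x y : joins e x y = joins e y x.
Proof. by rewrite /joins orbC. Qed.

Lemma joins_pair (G : mgraph) (e : gE G) a b c d :
  joins e a b -> joins e c d -> (a = c /\ b = d) \/ (a = d /\ b = c).
Proof. by case/joinsP=> [[<- <-]|[<- <-]] /joinsP [[-> ->]|[-> ->]]; auto. Qed.

Lemma joins_mapE (G H : mgraph) (e : gE G) (u : gE H) (f : gV G -> gV H) x y :
  joins e x y -> joins u (f x) (f y) = joins u (f (gsrc e)) (f (gtgt e)).
Proof. by case/joinsP=> [[<- <-]|[<- <-]] //; rewrite joinsC. Qed.

Lemma joins_map_ends (G : mgraph) (T : eqType) (f : gV G -> T) (e : gE G) x y :
  joins e x y -> (f (gsrc e) == f x) && (f (gtgt e) == f y) ||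
                 (f (gsrc e) == f y) && (f (gtgt e) == f x).
Proof. by case/joinsP=> [[-> ->]|[-> ->]]; rewrite !eqxx ?orbT. Qed.

Lemma joins_allE (G : mgraph) (P : pred (gV G)) (e : gE G) x y :
  joins e x y -> P (gsrc e) && P (gtgt e) = P x && P y.
Proof. by case/joinsP=> [[-> ->]|[-> ->]]; rewrite // andbC. Qed.

Definition par (G : mgraph) (e e' : gE G) := joins e' (gsrc e) (gtgt e).

Lemma joins_par (G : mgraph) (e e' : gE G) x y : joins e x y -> par e e' -> joins e' x y.
Proof. by case/joinsP=> [[<- <-]|[<- <-]] //; rewrite joinsC. Qed.

Lemma par_refl (G : mgraph) (e : gE G) : par e e.
Proof. exact: joins_refl. Qed.

Lemma par_sym (G : mgraph) (e e' : gE G) : par e e' -> par e' e.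
Proof. by move=> ee'; rewrite /par -(joins_mapE e id ee') joins_refl. Qed.

Lemma par_trans (G : mgraph) (e1 e2 e3 : gE G) : par e1 e2 -> par e2 e3 -> par e1 e3.
Proof. by move=> e12 e23; rewrite /par (joins_mapE e3 id e12). Qed.

Lemma card_sig_neq (T : finType) (x : T) : #|{: {y | y != x}}| < #|T|.
Proof.
rewrite card_sig (cardD1 x T) inE ltnS.
by apply/subset_leq_card/subsetP => y; rewrite !inE andbT.
Qed.

Lemma inj_surj_bij (T T' : finType) (f : T -> T') :
  injective f -> (forall y, exists x, f x = y) -> bijective f.
Proof.
move=> f_inj f_surj; have {}f_surj y : exists x, f x == y.
  by have [x <-] := f_surj y; exists x.
exists (fun y => xchoose (f_surj y)) => [x|y]; last exact/eqP/(xchooseP (f_surj y)).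
by apply: f_inj; apply/eqP/(xchooseP (f_surj (f x))).
Qed.

Lemma con_mapK (G : mgraph) (f : gE G) (x : con_V f) : con_map f (val x) = x.
Proof.
by case: x => x /= xP; apply: val_inj => /=; case: eqP xP => //= -> /eqP.
Qed.

Lemma con_map_joins (G : mgraph) (f : gE G) x y : joins f x y -> con_map f x = con_map f y.
Proof. by case/joinsP=> [[<- <-]|[<- <-]]; apply: val_inj => /=; rewrite eqxx; case: eqP. Qed.

Lemma joins_contr (G : mgraph) (d e : gE G) (e_d : e != d) x y :
  joins e x y -> joins (exist _ e e_d : gE (contr d)) (con_map d x) (con_map d y).
Proof. exact: joins_map_ends. Qed.

Lemma con_map_eq (G : mgraph) (d : gE G) x y :
  con_map d x = con_map d y -> x = y \/ joins d x y.
Proof.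
move/(congr1 val) => /=; rewrite /joins.
case: (x =P gtgt d) => [->|_]; case: (y =P gtgt d) => [->|_] //; auto.
- by move=> ->; rewrite !eqxx orbT; auto.
- by move=> ->; rewrite !eqxx; auto.
Qed.

Lemma con_map_comp (G H : mgraph) (phi : gV G -> gV H) (f : gE G) (u : gE H) x :
  joins u (phi (gsrc f)) (phi (gtgt f)) ->
  con_map u (phi (val (con_map f x))) = con_map u (phi x).
Proof.
move=> fu; apply: val_inj => /=; case: (x =P gtgt f) => [->|//].
by case/joinsP: fu => [[-> ->]|[-> ->]]; rewrite eqxx; case: eqP.
Qed.

Lemma con_map_bij (G H : mgraph) (phi : gV G -> gV H) (f : gE G) (u : gE H) :
  bijective phi -> joins u (phi (gsrc f)) (phi (gtgt f)) ->
  exists2 phi' : con_V f -> con_V u,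
    bijective phi' & forall x, phi' (con_map f x) = con_map u (phi x).
Proof.
case=> psi phiK psiK fu.
have uf : joins f (psi (gsrc u)) (psi (gtgt u)).
  by rewrite -(joins_mapE f psi fu) !phiK joins_refl.
exists (fun x => con_map u (phi (val x))); last by move=> x; rewrite con_map_comp.
exists (fun y => con_map f (psi (val y))) => [x|y].
  by rewrite con_map_comp // phiK con_mapK.
by rewrite con_map_comp // psiK con_mapK.
Qed.

Lemma mreach_trans G1 G2 G3 : mreach G1 G2 -> mreach G2 G3 -> mreach G1 G3.
Proof. by elim=> // A B C H _ IH /IH; apply: MR_step. Qed.

Lemma sreach_trans G1 G2 G3 : sreach G1 G2 -> sreach G2 G3 -> sreach G1 G3.
Proof. by elim=> // A B C H _ IH /IH; apply: SR_step. Qed.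

Lemma sreach1 G1 G2 : sstep G1 G2 -> sreach G1 G2.
Proof. by move=> H; apply: SR_step H (SR_refl _). Qed.

Lemma mreach1 G1 G2 : mstep G1 G2 -> mreach G1 G2.
Proof. by move=> H; apply: MR_step H (MR_refl _). Qed.

(** * Switching colourings *)

(* [c] is a colouring and [f] a switching under which every monochromatic edge is positive. *)
Definition switch_colorable (G : sgraph) (k : nat) : Prop :=
  exists (c : gV (ug G) -> 'I_k) (f : gV (ug G) -> bool),
    forall e, c (gsrc e) == c (gtgt e) -> sneg e = f (gsrc e) (+) f (gtgt e).

Definition switch_chi_ge (G : sgraph) (t : nat) : Prop :=
  forall k, switch_colorable G k -> t <= k.

Lemma odd_count_addb T (a b : pred T) s :
  odd (count (fun x => a x (+) b x) s) = odd (count a s) (+) odd (count b s).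
Proof. by elim: s => //= x s IH; rewrite !oddD IH !oddb addbACA. Qed.

Lemma mem_zip (S T : eqType) (s : seq S) (t : seq T) p :
  p \in zip s t -> p.1 \in s /\ p.2 \in t.
Proof.
elim: s t => [|x s IH] [|y t] //; rewrite inE => /orP [/eqP -> | /IH [ps pt]].
  by rewrite /= !inE !eqxx.
by rewrite !inE ps pt !orbT.
Qed.

Lemma odd_count_cycle T (a : pred T) (s : seq T) :
  ~~ odd (count (fun p => a p.1 (+) a p.2) (zip s (rot 1 s))).
Proof.
have s_rot : size s <= size (rot 1 s) by rewrite size_rot.
have rot_s : size (rot 1 s) <= size s by rewrite size_rot.
have count1 : count (fun p => a p.1) (zip s (rot 1 s)) = count a s.
  by rewrite -[in RHS](unzip1_zip s_rot) count_map.
have count2 : count (fun p => a p.2) (zip s (rot 1 s)) = count a s.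
  have -> : count a s = count a (rot 1 s).
    by rewrite /rot count_cat addnC -count_cat cat_take_drop.
  by rewrite -[in RHS](unzip2_zip rot_s) count_map.
by rewrite odd_count_addb count1 count2 addbb.
Qed.

(* On a colour class the sign of an edge is [f] of one end plus [f] of the other,
   so the signs around a cycle cancel. *)
Lemma switch_colorable_bcolorable (G : sgraph) k :
  switch_colorable G k -> bcolorable G k.
Proof.
case=> c [f cf]; exists c => i s /and4P [_ _ _ s_joins] s_i.
have s_rot : size s <= size (rot 1 s) by rewrite size_rot.
rewrite /neg_cycle -[s in count _ s](unzip1_zip s_rot) count_map.
rewrite (@eq_in_count _ _ (fun p => f p.1.1 (+) f p.2.1)).
  exact: odd_count_cycle (fun q => f q.1) s.
move=> p p_zip /=; have [p1s p2s] := mem_zip p_zip; rewrite mem_rot in p2s.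
have /eqP ci1 := allP s_i _ p1s; have /eqP ci2 := allP s_i _ p2s.
case/joinsP: (allP s_joins _ p_zip) => [[v1 v2]|[v1 v2]]; rewrite cf -?v1 -?v2 //.
- by rewrite v1 v2 ci1 ci2.
- by rewrite addbC.
- by rewrite v1 v2 ci1 ci2.
Qed.

Lemma switch_colorable_dele_loop (G : sgraph) (d : gE (ug G)) k :
  gsrc d = gtgt d -> ~~ sneg d -> switch_colorable (sdele d) k -> switch_colorable G k.
Proof.
move=> d_loop d_pos [c [f cf]]; exists c, f => e.
case: (eqVneq e d) => [-> _|e_d]; last exact: (cf (exist _ e e_d)).
by rewrite d_loop addbb (negbTE d_pos).
Qed.

Lemma switch_colorable_dele_twin (G : sgraph) (e d : gE (ug G)) k :
  d != e -> par e d -> sneg d = sneg e ->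
  switch_colorable (sdele d) k -> switch_colorable G k.
Proof.
move=> d_e ed de_sign [c [f cf]]; exists c, f => e'.
case: (eqVneq e' d) => [->|e'_d]; last exact: (cf (exist _ e' e'_d)).
have cfe : c (gsrc e) == c (gtgt e) -> sneg e = f (gsrc e) (+) f (gtgt e).
  by rewrite eq_sym in d_e; apply: (cf (exist _ e d_e)).
rewrite de_sign; case/joinsP: ed => [[-> ->]|[-> ->]] //.
by rewrite eq_sym addbC.
Qed.

Lemma switch_colorable_switch (G : sgraph) (v : gV (ug G)) k :
  switch_colorable (sswitch v) k -> switch_colorable G k.
Proof.
case=> c [f cf]; exists c, (fun x => f x (+) (x == v)) => e /cf /= e_sign.
rewrite -[sneg e]addbF -(addbb ((gsrc e == v) (+) (gtgt e == v))) addbA e_sign.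
by rewrite -!addbA; congr (_ (+) _); rewrite addbCA.
Qed.

Lemma switch_colorable_contr (G : sgraph) (d : gE (ug G)) k :
  ~~ sneg d -> switch_colorable (scontr d) k -> switch_colorable G k.
Proof.
move=> d_pos [c [f cf]].
exists (fun x => c (con_map d x)), (fun x => f (con_map d x)) => e.
case: (eqVneq e d) => [-> _|e_d]; last exact: (cf (exist _ e e_d)).
by rewrite (con_map_joins (joins_refl d)) addbb (negbTE d_pos).
Qed.

Lemma no_neg_loop_dele (G : sgraph) (d : gE (ug G)) :
  no_neg_loop G -> no_neg_loop (sdele d).
Proof. by move=> G_nnl e; apply: G_nnl. Qed.

Lemma no_neg_loop_switch (G : sgraph) (v : gV (ug G)) :
  no_neg_loop G -> no_neg_loop (sswitch v).
Proof. by move=> G_nnl e /= /eqP e_loop; rewrite e_loop addbb addbF G_nnl ?e_loop. Qed.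

Lemma no_neg_loop_contr (G : sgraph) (d : gE (ug G)) :
  (forall e, e != d -> par d e -> sneg e = sneg d) ->
  ~~ sneg d -> no_neg_loop G -> no_neg_loop (scontr d) .
Proof.
move=> d_par d_pos G_nnl [e e_d] /= /eqP /con_map_eq [e_loop|de].
  by apply: G_nnl; rewrite e_loop.
by rewrite d_par // par_sym.
Qed.

(* Colour [x] by [2 c x + f x]: a monochromatic edge would have equal colours and
   equal switching values at its ends, hence be positive. *)
Lemma switch_chi_allneg (G : mgraph) t :
  chi_ge G (2 * t) -> switch_chi_ge (allneg G) t.
Proof.
move=> G_chi k [c [f cf]].
have cf_lt x : f x + (c x).*2 < 2 * k.
  apply: (@leq_trans (c x).+1.*2); first by rewrite doubleS; case: (f x).
  by rewrite -mul2n leq_pmul2l.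
rewrite -(leq_pmul2l (isT : 0 < 2)); apply: G_chi.
exists (fun x => Ordinal (cf_lt x)) => e; apply/negP => /eqP /(congr1 val) /= same.
have same_c : c (gsrc e) = c (gtgt e).
  by apply: val_inj; have := congr1 half same; rewrite !half_bit_double.
have same_f : f (gsrc e) = f (gtgt e).
  by have := congr1 odd same; rewrite !oddD !odd_double !addbF !oddb.
by have := cf e; rewrite same_c eqxx same_f addbb => /(_ isT).
Qed.

(** * Signed graphs of the form tilde U *)

(* [S] is [U] with every edge [u] replaced by a negative copy and, when [Q u], a
   positive copy: [phi] identifies the vertices and [e |-> (pi e, sneg e)] is a
   bijection onto the copies. *)
Definition tilde_on (S : sgraph) (U : mgraph) (Q : pred (gE U)) : Prop :=
  exists (phi : gV (ug S) -> gV U) (pi : gE (ug S) -> gE U),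
  [/\ bijective phi,
      forall e, joins (pi e) (phi (gsrc e)) (phi (gtgt e)),
      forall u b, (exists e, pi e = u /\ sneg e = b) <-> (b || Q u) &
      forall e1 e2, pi e1 = pi e2 -> sneg e1 = sneg e2 -> e1 = e2].
Arguments tilde_on : clear implicits.

Lemma tilde_fibre (S : sgraph) (U : mgraph) (Q : pred (gE U)) (pi : gE (ug S) -> gE U) u :
  (forall u b, (exists e, pi e = u /\ sneg e = b) <-> (b || Q u)) ->
  (forall e1 e2, pi e1 = pi e2 -> sneg e1 = sneg e2 -> e1 = e2) -> Q u ->
  exists ep em, [/\ pi ep = u /\ ~~ sneg ep, pi em = u /\ sneg em &
                    forall e, pi e = u -> e = ep \/ e = em].
Proof.
move=> pi_fib pi_inj Qu.
have [ep [ep_u ep_pos]] : exists e, pi e = u /\ sneg e = false by apply/pi_fib; rewrite Qu.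
have [em [em_u em_neg]] : exists e, pi e = u /\ sneg e = true by apply/pi_fib.
exists ep, em; split; rewrite ?ep_pos //.
by move=> e e_u; case e_sign: (sneg e); [right|left]; apply: pi_inj; rewrite ?e_u ?e_sign.
Qed.

Section LiftMinor.
Variables (S : sgraph) (U : mgraph).
Hypothesis S_U : tilde_on S U predT.

Lemma tilde_lift_delv (v : gV U) :
  exists S', sreach S S' /\ tilde_on S' (delv v) predT.
Proof.
case: S_U => phi [pi [[psi phiK psiK] pi_ends pi_fib pi_inj]].
have phi_ne x : (x != psi v) = (phi x != v).
  by rewrite -(inj_eq (can_inj phiK)) psiK.
have phiP (x : {x | x != psi v}) : phi (val x) != v by rewrite -phi_ne (valP x).
have psiP (y : {y | y != v}) : psi (val y) != psi v.
  by rewrite (inj_eq (can_inj psiK)) (valP y).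
have piP (e : {e : gE (ug S) | (gsrc e != psi v) && (gtgt e != psi v)}) :
    (gsrc (pi (val e)) != v) && (gtgt (pi (val e)) != v).
  by rewrite (joins_allE (fun z => z != v) (pi_ends _)) -!phi_ne (valP e).
exists (sdelv (psi v)); split; first exact/sreach1/SS_delv.
exists (fun x => exist _ (phi (val x)) (phiP x)), (fun e => exist _ (pi (val e)) (piP e)).
split.
- exists (fun y => exist _ (psi (val y)) (psiP y)) => [x|y]; apply: val_inj => /=.
    by rewrite phiK.
  by rewrite psiK.
- by move=> e; rewrite /joins -!val_eqE; apply: pi_ends.
- move=> u b; split=> [_|_]; first by rewrite orbT.
  have [e [e_u e_b]] : exists e, pi e = val u /\ sneg e = b by apply/pi_fib; rewrite orbT.
  have eP : (gsrc e != psi v) && (gtgt e != psi v).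
    by rewrite !phi_ne -(joins_allE (fun z => z != v) (pi_ends _)) e_u (valP u).
  by exists (exist _ e eP); split=> //; apply: val_inj.
- by move=> [e1 ?] [e2 ?] /(congr1 val) /= e12 s12; apply/val_inj/pi_inj.
Qed.

Lemma tilde_lift_dele (u : gE U) :
  exists S', sreach S S' /\ tilde_on S' (dele u) predT.
Proof.
case: S_U => phi [pi [phi_bij pi_ends pi_fib pi_inj]].
have [ep [em [[ep_u ep_pos] [em_u em_neg] fib_u]]] :=
  tilde_fibre pi_fib pi_inj (isT : predT u).
have em_ep : em != ep by apply: contraNneq ep_pos => <-.
pose em' : gE (ug (sdele ep)) := exist _ em em_ep.
have piP (e : gE (ug (sdele em'))) : pi (val (val e)) != u.
  case: e => [[e e_ep] e_em] /=; rewrite -val_eqE /= in e_em.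
  by apply/eqP => /fib_u [] e_eq; [move: e_ep|move: e_em]; rewrite e_eq eqxx.
exists (sdele em'); split; first exact: SR_step (SS_dele ep) (sreach1 (SS_dele em')).
exists phi, (fun e => exist _ (pi (val (val e))) (piP e)); split=> //.
- by move=> e; apply: pi_ends.
- move=> u' b; split=> [_|_]; first by rewrite orbT.
  have [e [e_u' e_b]] : exists e, pi e = val u' /\ sneg e = b by apply/pi_fib; rewrite orbT.
  have e_ep : e != ep by apply: contra_neq (valP u') => e_ep; rewrite -e_u' e_ep.
  have e_em : exist _ e e_ep != em'.
    by rewrite -val_eqE; apply: contra_neq (valP u') => /= e_em; rewrite -e_u' e_em.
  by exists (exist _ (exist _ e e_ep) e_em); split=> //; apply: val_inj.
- move=> [[e1 ?] ?] [[e2 ?] ?] /(congr1 val) /= e12 s12.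
  by do 2 apply: val_inj; apply: pi_inj.
Qed.

(* Contract the positive copy of [u]; the negative copy becomes a loop and is deleted. *)
Lemma tilde_lift_contr (u : gE U) :
  exists S', sreach S S' /\ tilde_on S' (contr u) predT.
Proof.
case: S_U => phi [pi [phi_bij pi_ends pi_fib pi_inj]].
have [ep [em [[ep_u ep_pos] [em_u em_neg] fib_u]]] :=
  tilde_fibre pi_fib pi_inj (isT : predT u).
have em_ep : em != ep by apply: contraNneq ep_pos => <-.
pose em' : gE (ug (scontr ep)) := exist _ em em_ep.
have piP (e : gE (ug (sdele em'))) : pi (val (val e)) != u.
  case: e => [[e e_ep] e_em] /=; rewrite -val_eqE /= in e_em.
  by apply/eqP => /fib_u [] e_eq; [move: e_ep|move: e_em]; rewrite e_eq eqxx.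
have ep_ends : joins u (phi (gsrc ep)) (phi (gtgt ep)) by rewrite -ep_u.
have [phi' phi'_bij phi'E] := con_map_bij phi_bij ep_ends.
exists (sdele em'); split; first exact: SR_step (SS_contr ep_pos) (sreach1 (SS_dele em')).
exists phi', (fun e => exist _ (pi (val (val e))) (piP e)); split=> //.
- by move=> [[e ? ] ?]; rewrite /= !phi'E; apply/joins_contr/pi_ends.
- move=> u' b; split=> [_|_]; first by rewrite orbT.
  have [e [e_u' e_b]] : exists e, pi e = val u' /\ sneg e = b by apply/pi_fib; rewrite orbT.
  have e_ep : e != ep by apply: contra_neq (valP u') => e_ep; rewrite -e_u' e_ep.
  have e_em : exist _ e e_ep != em'.
    by rewrite -val_eqE; apply: contra_neq (valP u') => /= e_em; rewrite -e_u' e_em.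
  by exists (exist _ (exist _ e e_ep) e_em); split=> //; apply: val_inj.
- move=> [[e1 ?] ?] [[e2 ?] ?] /(congr1 val) /= e12 s12.
  by do 2 apply: val_inj; apply: pi_inj.
Qed.
End LiftMinor.

Lemma tilde_lift_mreach U U' S : mreach U U' -> tilde_on S U predT ->
  exists S', sreach S S' /\ tilde_on S' U' predT.
Proof.
move=> UU'; elim: UU' S => [G|G G' G'' GG' _ IH] S S_G.
  by exists S; split=> //; apply: SR_refl.
have [S1 [SS1 S1_G']] : exists S1, sreach S S1 /\ tilde_on S1 G' predT.
  case: GG' => [v|e|e].
  - exact: tilde_lift_delv.
  - exact: tilde_lift_dele.
  - exact: tilde_lift_contr.
have [S2 [S1S2 S2_G'']] := IH _ S1_G'.
by exists S2; split=> //; apply: sreach_trans SS1 S1S2.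
Qed.

Lemma siso_tilde (S : sgraph) (U H : mgraph) :
  tilde_on S U predT -> miso U H -> siso S (tilde H).
Proof.
case=> phi [pi [phi_bij pi_ends pi_fib pi_inj]].
case=> phi2 [psi2 [phi2_bij [psi2' psi2K psi2K'] ends2]].
exists (fun x => phi2 (phi x)), (fun e => (psi2 (pi e), sneg e)); split=> //.
- exact: bij_comp.
- apply: inj_surj_bij => [e1 e2 [/(can_inj psi2K) e12 s12]|[h b]]; first exact: pi_inj.
  have [e [e_h e_b]] : exists e, pi e = psi2' h /\ sneg e = b by apply/pi_fib; rewrite orbT.
  by exists e; rewrite e_h psi2K' e_b.
- by move=> e; have := ends2 (pi e); rewrite -(joins_mapE _ phi2 (pi_ends e)).
Qed.

Lemma siso_allneg (S : sgraph) (U H : mgraph) :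
  tilde_on S U pred0 -> miso U H -> siso S (allneg H).
Proof.
case=> phi [pi [phi_bij pi_ends pi_fib pi_inj]].
case=> phi2 [psi2 [phi2_bij [psi2' psi2K psi2K'] ends2]].
have S_neg (e : gE (ug S)) : sneg e.
  apply: contraT => /negbTE e_pos.
  by have /pi_fib : exists e', pi e' = pi e /\ sneg e' = false by exists e.
exists (fun x => phi2 (phi x)), (fun e => psi2 (pi e)); split=> //.
- exact: bij_comp.
- apply: inj_surj_bij => [e1 e2 /(can_inj psi2K) e12|h].
    by apply: pi_inj; rewrite ?S_neg.
  have [e [e_h _]] : exists e, pi e = psi2' h /\ sneg e = true by apply/pi_fib.
  by exists e; rewrite e_h psi2K'.
- by move=> e; have := ends2 (pi e); rewrite -(joins_mapE _ phi2 (pi_ends e)).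
- by move=> e; rewrite S_neg.
Qed.

Lemma tilde_dele_pos (S : sgraph) (U : mgraph) (Q : pred (gE U)) u :
  tilde_on S U Q -> Q u -> exists ep : gE (ug S), tilde_on (sdele ep) U (predD1 Q u).
Proof.
case=> phi [pi [phi_bij pi_ends pi_fib pi_inj]] Qu.
have [ep [ep_u ep_pos]] : exists e, pi e = u /\ sneg e = false by apply/pi_fib; rewrite Qu.
exists ep, phi, (fun e => pi (val e)); split=> //.
- move=> u' b; split=> [[[e e_ep] /= [e_u' e_b]]|/= bQ].
    have := proj1 (pi_fib u' b) (ex_intro _ e (conj e_u' e_b)).
    case: b e_b => //= e_pos ->; rewrite andbT.
    by apply: contra_neq e_ep => u'u; apply: pi_inj; rewrite ?e_u' ?u'u ?e_pos.
  have [e [e_u' e_b]] : exists e, pi e = u' /\ sneg e = b.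
    by apply/pi_fib; case: b bQ => //= /andP [].
  have e_ep : e != ep.
    by apply: contraTneq bQ => e_ep; rewrite -e_b e_ep ep_pos /= -e_u' e_ep ep_u eqxx.
  by exists (exist _ e e_ep).
- by move=> [e1 ?] [e2 ?] /= e12 s12; apply/val_inj/pi_inj.
Qed.

Lemma tilde_on_pred0 (S : sgraph) (U : mgraph) (Q : pred (gE U)) :
  Q =1 pred0 -> tilde_on S U Q -> tilde_on S U pred0.
Proof.
move=> Q0 [phi [pi [phi_bij pi_ends pi_fib pi_inj]]].
by exists phi, pi; split=> // u b; rewrite pi_fib Q0.
Qed.

Lemma tilde_dele_all_pos (S : sgraph) (U : mgraph) (Q : pred (gE U)) :
  tilde_on S U Q -> exists S', sreach S S' /\ tilde_on S' U pred0.
Proof.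
have [n] := ubnP #|Q|; elim: n S Q => // n IH S Q Q_n S_U.
case: (pickP Q) => [u Qu|Q0]; last first.
  by exists S; split; [apply: SR_refl | apply: tilde_on_pred0 S_U].
have [ep S'_U] := tilde_dele_pos S_U Qu.
have Q'_n : #|predD1 Q u| < n by move: Q_n; rewrite (cardD1 u) [u \in Q]Qu.
have [S' [S'S' S'_0]] := IH _ _ Q'_n S'_U.
by exists S'; split=> //; apply: SR_step (SS_dele ep) S'S'.
Qed.

(** * Reduction to a tilde graph *)

Definition reduces_to (G G' : sgraph) : Prop :=
  [/\ sreach G G', #|gE (ug G')| < #|gE (ug G)|, no_neg_loop G' &
      forall k, switch_colorable G' k -> switch_colorable G k].

Lemma reduce_loop (G : sgraph) (d : gE (ug G)) :
  no_neg_loop G -> gsrc d = gtgt d -> reduces_to G (sdele d).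
Proof.
move=> G_nnl d_loop; split; first exact/sreach1/SS_dele.
- exact: card_sig_neq.
- exact: no_neg_loop_dele.
- by move=> k; apply: switch_colorable_dele_loop; rewrite ?G_nnl ?d_loop.
Qed.

Lemma reduce_twin (G : sgraph) (e d : gE (ug G)) :
  no_neg_loop G -> d != e -> par e d -> sneg d = sneg e -> reduces_to G (sdele d).
Proof.
move=> G_nnl d_e ed de_sign; split; first exact/sreach1/SS_dele.
- exact: card_sig_neq.
- exact: no_neg_loop_dele.
- by move=> k; apply: switch_colorable_dele_twin d_e ed de_sign.
Qed.

Lemma reduce_contr (G : sgraph) (d : gE (ug G)) :
  no_neg_loop G -> ~~ sneg d -> (forall e, e != d -> par d e -> sneg e = sneg d) ->
  reduces_to G (scontr d).
Proof.
move=> G_nnl d_pos d_par; split; first exact/sreach1/SS_contr.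
- exact: card_sig_neq.
- exact: no_neg_loop_contr.
- by move=> k; apply: switch_colorable_contr.
Qed.

Lemma reduce_switch (G G' : sgraph) (v : gV (ug G)) :
  reduces_to (sswitch v) G' -> reduces_to G G'.
Proof.
case=> GG' G'_lt G'_nnl G'_col; split=> //; first exact: SR_step (SS_switch v) GG'.
by move=> k /G'_col; apply: switch_colorable_switch.
Qed.

(* Switching at one end makes [d] positive and keeps its parallel class of one sign. *)
Lemma reduce_unpaired (G : sgraph) (d : gE (ug G)) :
  no_neg_loop G -> gsrc d != gtgt d ->
  (forall e, e != d -> par d e -> sneg e = sneg d) -> exists G', reduces_to G G'.
Proof.
move=> G_nnl d_link d_par; case d_sign: (sneg d).
  exists (scontr (d : gE (ug (sswitch (gsrc d))))); apply: reduce_switch.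
  apply: reduce_contr; first exact: no_neg_loop_switch.
    by rewrite /= d_sign eqxx eq_sym (negbTE d_link).
  move=> e e_d /= de; rewrite d_par //.
  by case/joinsP: de => [[-> ->]|[-> ->]]; rewrite // (addbC (gtgt d == _)).
by exists (scontr d); apply: reduce_contr => //; rewrite d_sign.
Qed.

Definition pos_part (G : sgraph) : mgraph :=
  @MGraph (gV (ug G)) {e : gE (ug G) | ~~ sneg e}
          (fun e => gsrc (val e)) (fun e => gtgt (val e)).

Section Irreducible.
Variable G : sgraph.
Hypothesis G_twin_free : forall e e' : gE (ug G), e != e' -> par e e' -> sneg e' != sneg e.
Hypothesis G_paired :
  forall e : gE (ug G), exists e', [/\ e' != e, par e e' & sneg e' != sneg e].

Lemma pos_partner_ex (e : gE (ug G)) : exists e', ~~ sneg e' && par e e'.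
Proof.
case e_sign: (sneg e); last by exists e; rewrite e_sign par_refl.
have [e' [_ ee' e'_sign]] := G_paired e; exists e'; rewrite ee' andbT.
by move: e'_sign; rewrite e_sign; case: (sneg e').
Qed.

Let pos_partner e := xchoose (pos_partner_ex e).
Let pos_partnerP e : ~~ sneg (pos_partner e) && par e (pos_partner e) :=
  xchooseP (pos_partner_ex e).

Lemma pos_parallel_uniq (e e1 e2 : gE (ug G)) :
  ~~ sneg e1 -> ~~ sneg e2 -> par e e1 -> par e e2 -> e1 = e2.
Proof.
move=> e1_pos e2_pos ee1 ee2; apply/eqP; apply: contraT => e12.
have := G_twin_free e12 (par_trans (par_sym ee1) ee2).
by rewrite (negbTE e1_pos) (negbTE e2_pos).
Qed.

Lemma switch_colorable_pos_part k : colorable (pos_part G) k -> switch_colorable G k.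
Proof.
case=> c c_proper; exists c, (fun _ => false) => e ce; exfalso.
have /andP [p_pos ep] := pos_partnerP e.
have := c_proper (exist _ (pos_partner e) p_pos) => /=.
case/orP: (joins_map_ends (G := ug G) c ep) => /andP [/eqP -> /eqP ->].
  by rewrite (eqP ce) eqxx.
by rewrite (eqP ce) eqxx.
Qed.

Lemma tilde_pos_part : tilde_on G (pos_part G) predT.
Proof.
have p_pos e : ~~ sneg (pos_partner e) by case/andP: (pos_partnerP e).
have p_par e : par e (pos_partner e) by case/andP: (pos_partnerP e).
exists id, (fun e => exist _ (pos_partner e) (p_pos e)); split.
- by exists id.
- exact: p_par.
- move=> u b; split=> [_|_]; first by rewrite orbT.
  case: b.
  + have [e [_ ue e_sign]] := G_paired (val u); exists e; split.
      by apply/val_inj/(pos_parallel_uniq (p_pos e) (valP u) (p_par e)); rewrite par_sym.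
    by move: e_sign (valP u); case: (sneg e); case: (sneg (val u)).
  + exists (val u); split; last exact/negbTE/(valP u).
    exact/val_inj/(pos_parallel_uniq (p_pos _) (valP u) (p_par _) (par_refl _)).
- move=> e1 e2 /(congr1 val) /= p12 s12; apply/eqP; apply: contraT => e12.
  have := G_twin_free e12 (par_trans (p_par e1) (par_sym _)).
  by rewrite p12 s12 eqxx => /(_ (p_par e2)).
Qed.
End Irreducible.

Definition tildeK_minor (k : nat) (G : sgraph) : Prop :=
  exists S U, [/\ sreach G S, tilde_on S U predT & miso U (K k)].

Section Reduction.
Variables (t m : nat).
Hypothesis t_m : PM t m.

Lemma tildeK_minor_irreducible (G : sgraph) :
  no_neg_loop G -> switch_chi_ge G t -> ~ (exists G', reduces_to G G') -> tildeK_minor m G.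
Proof.
move=> G_nnl G_chi G_irr.
have G_loopless (e : gE (ug G)) : gsrc e != gtgt e.
  by apply/eqP => e_loop; apply: G_irr; exists (sdele e); apply: reduce_loop.
have G_twin_free (e e' : gE (ug G)) : e != e' -> par e e' -> sneg e' != sneg e.
  move=> e_e' ee'; apply/eqP => same_sign; apply: G_irr.
  by exists (sdele e'); apply: (reduce_twin (e := e)); rewrite // eq_sym.
have G_paired (e : gE (ug G)) : exists e', [/\ e' != e, par e e' & sneg e' != sneg e].
  apply: NNPP => unpaired; apply/G_irr/(reduce_unpaired G_nnl (G_loopless e)) => e' e'_e ee'.
  by apply/eqP; apply: contraT => opposite; case: unpaired; exists e'.
have U_chi : chi_ge (pos_part G) t.
  by move=> k /(switch_colorable_pos_part G_paired); apply: G_chi.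
have [U [GU U_K]] := t_m (fun e : gE (pos_part G) => G_loopless (val e)) U_chi.
have [S [GS S_U]] := tilde_lift_mreach GU (tilde_pos_part G_twin_free G_paired).
by exists S, U.
Qed.

Lemma tildeK_minor_of_switch_chi (G : sgraph) :
  no_neg_loop G -> switch_chi_ge G t -> tildeK_minor m G.
Proof.
have [n] := ubnP #|gE (ug G)|; elim: n G => // n IH G G_n G_nnl G_chi.
case: (classic (exists G', reduces_to G G')); last exact: tildeK_minor_irreducible.
case=> G' [GG' G'_lt G'_nnl G'_col].
have G'_chi : switch_chi_ge G' t by move=> k /G'_col; apply: G_chi.
have [S [U [G'S S_U U_K]]] := IH G' (leq_trans G'_lt G_n) G'_nnl G'_chi.
by exists S, U; split=> //; apply: sreach_trans GG' G'S.
Qed.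
End Reduction.

(** * Projecting minors of tilde G *)

Lemma sreach_mreach (S S' : sgraph) : sreach S S' -> mreach (ug S) (ug S').
Proof.
elim=> [G|G G' G'' GG' _ G'G'']; first exact: MR_refl.
case: GG' G'G'' => [v|e|e _|v] G'G'' //.
- exact: MR_step (MS_delv v) G'G''.
- exact: MR_step (MS_dele e) G'G''.
- exact: MR_step (MS_contr e) G'G''.
Qed.

(* [H] contains [A] up to loops and multiplicities of edges. *)
Definition covered_by (A H : mgraph) : Prop :=
  exists phi : gV A -> gV H, bijective phi /\
    forall e : gE A, gsrc e = gtgt e \/ exists u : gE H, joins u (phi (gsrc e)) (phi (gtgt e)).

Lemma covered_by_delv (A H : mgraph) (v : gV A) :
  covered_by A H -> exists H', mreach H H' /\ covered_by (delv v) H'.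
Proof.
case=> phi [[psi phiK psiK] A_H].
have phi_ne x : (x != v) = (phi x != phi v) by rewrite (inj_eq (can_inj phiK)).
have phiP (x : {x | x != v}) : phi (val x) != phi v by rewrite -phi_ne (valP x).
have psiP (y : {y | y != phi v}) : psi (val y) != v by rewrite phi_ne psiK (valP y).
exists (delv (phi v)); split; first exact/mreach1/MS_delv.
exists (fun x => exist _ (phi (val x)) (phiP x)); split.
  exists (fun y => exist _ (psi (val y)) (psiP y)) => [x|y]; apply: val_inj => /=.
    by rewrite phiK.
  by rewrite psiK.
move=> [e eP] /=; case: (A_H e) => [e_loop|[u u_e]]; first by left; apply: val_inj.
have uP : (gsrc u != phi v) && (gtgt u != phi v).
  by rewrite (joins_allE (fun z => z != phi v) u_e) -!phi_ne.
by right; exists (exist _ u uP); rewrite /joins -!val_eqE.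
Qed.

Lemma covered_by_dele (A H : mgraph) (d : gE A) :
  covered_by A H -> covered_by (dele d) H.
Proof. by case=> phi [phi_bij A_H]; exists phi; split=> // e; apply: A_H. Qed.

Lemma covered_by_contr (A H : mgraph) (f : gE A) :
  covered_by A H -> exists H', mreach H H' /\ covered_by (contr f) H'.
Proof.
case=> phi [phi_bij A_H].
have [f_loop|[u u_f]] := A_H f.
  have con_f x : (if x == gtgt f then gsrc f else x) = x by rewrite f_loop; case: eqP => // ->.
  exists H; split; first exact: MR_refl.
  exists (fun x => phi (val x)); split.
    by apply: bij_comp phi_bij _; exists (con_map f) => [x|y]; [apply: con_mapK|apply: con_f].
  move=> [e _] /=; rewrite !con_f.
  by case: (A_H e) => [e_loop|]; [left; rewrite e_loop|right].
have [phi' phi'_bij phi'E] := con_map_bij phi_bij u_f.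
exists (contr u); split; first exact/mreach1/MS_contr.
exists phi'; split=> // -[e e_f] /=; rewrite !phi'E.
case: (A_H e) => [e_loop|[u' u'_e]]; first by left; rewrite e_loop.
case: (eqVneq u' u) => [u'u|u'_u]; last by right; exists (exist _ u' u'_u); apply: joins_contr.
by left; apply: (bij_inj phi'_bij); rewrite !phi'E; apply: con_map_joins; rewrite -u'u.
Qed.

Lemma covered_by_mreach (A A' H : mgraph) : mreach A A' -> covered_by A H ->
  exists H', mreach H H' /\ covered_by A' H'.
Proof.
move=> AA'; elim: AA' H => [G|G G' G'' GG' _ IH] H G_H.
  by exists H; split=> //; apply: MR_refl.
have [H1 [HH1 G'_H1]] : exists H1, mreach H H1 /\ covered_by G' H1.
  case: GG' => [v|e|e]; [exact: covered_by_delv|exists H|exact: covered_by_contr].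
  by split; [apply: MR_refl|apply: covered_by_dele].
have [H2 [H1H2 G''_H2]] := IH _ G'_H1.
by exists H2; split=> //; apply: mreach_trans HH1 H1H2.
Qed.

Lemma siso_miso (S T : sgraph) : siso S T -> miso (ug S) (ug T).
Proof. by case=> phi [psi [phi_bij psi_bij ends _]]; exists phi, psi. Qed.

Lemma covered_by_miso (A B H : mgraph) : covered_by A H -> miso A B -> covered_by B H.
Proof.
case=> phi [phi_bij A_H] [chi [psi [[chi' chiK chiK'] [psi' psiK psiK'] psi_ends]]].
exists (fun y => phi (chi' y)); split; first by apply: bij_comp phi_bij _; exists chi.
move=> b; have := psi_ends (psi' b); rewrite psiK' => b_ends.
case: (A_H (psi' b)) => [a_loop|[u u_a]].
  by left; case/joinsP: b_ends => -[-> ->]; rewrite a_loop.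
right; exists u; rewrite -(joins_mapE u (fun y => phi (chi' y)) b_ends) !chiK; exact: u_a.
Qed.

Lemma covered_by_tilde (A H : mgraph) : covered_by (ug (tilde A)) H -> covered_by A H.
Proof. by case=> phi [phi_bij A_H]; exists phi; split=> // e; apply: (A_H (e, false)). Qed.

Lemma covered_by_dele_loop (A H : mgraph) (d : gE H) :
  gsrc d = gtgt d -> covered_by A H -> covered_by A (dele d).
Proof.
move=> d_loop [phi [phi_bij A_H]]; exists phi; split=> // e.
case: (A_H e) => [|[u u_e]]; [by left|case: (eqVneq u d) => [u_d|u_d]].
  left; apply: (bij_inj phi_bij).
  by case/joinsP: u_e => -[<- <-]; rewrite u_d d_loop.
by right; exists (exist _ u u_d).
Qed.

Lemma covered_by_dele_twin (A H : mgraph) (d d' : gE H) :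
  d' != d -> par d d' -> covered_by A H -> covered_by A (dele d).
Proof.
move=> d'_d dd' [phi [phi_bij A_H]]; exists phi; split=> // e.
case: (A_H e) => [|[u u_e]]; [by left|right; case: (eqVneq u d) => [u_d|u_d]].
  by exists (exist _ d' d'_d); apply: joins_par u_e _; rewrite u_d.
by exists (exist _ u u_d).
Qed.

Lemma K_loopless k : loopless (K k).
Proof. by move=> [[x y] /= xy]; rewrite neq_ltn xy. Qed.

Lemma K_joins_uniq k (p p' : gE (K k)) x y : joins p x y -> joins p' x y -> p = p'.
Proof.
case: p p' => [[a b] /= ab] [[a' b'] /= ab'] p_xy p'_xy; apply: val_inj => /=.
case/joinsP: p_xy => /= -[? ?]; case/joinsP: p'_xy => /= -[? ?]; subst => //.
  by move: (ltn_trans ab ab'); rewrite ltnn.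
by move: (ltn_trans ab ab'); rewrite ltnn.
Qed.

Lemma K_joins_ex k (x y : 'I_k) : x != y -> exists p : gE (K k), joins p x y.
Proof.
rewrite neq_ltn => /orP [xy|yx].
  by exists (exist (fun p : 'I_k * 'I_k => p.1 < p.2) (x, y) xy); rewrite /joins /= !eqxx.
by exists (exist (fun p : 'I_k * 'I_k => p.1 < p.2) (y, x) yx); rewrite /joins /= !eqxx orbT.
Qed.

Lemma miso_K_of_covered_by k (H : mgraph) :
  (forall d : gE H, gsrc d != gtgt d) -> (forall d d' : gE H, d != d' -> ~~ par d d') ->
  covered_by (K k) H -> miso H (K k).
Proof.
move=> H_loopless H_simple [phi [[chi phiK chiK] K_H]].
have chi_inj := can_inj chiK.
have psi_ex d : exists p : gE (K k), joins p (chi (gsrc d)) (chi (gtgt d)).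
  by apply: K_joins_ex; rewrite (inj_eq chi_inj).
exists chi, (fun d => xchoose (psi_ex d)); split=> [||d]; first by exists phi.
- apply: inj_surj_bij => [d d' same|p].
    apply/eqP; apply: contraTT (H_simple d d') _.
    have p_d := xchooseP (psi_ex d); have := xchooseP (psi_ex d'); rewrite -same => p_d'.
    rewrite /par; case: (joins_pair p_d p_d') => -[/chi_inj -> /chi_inj ->].
      exact: joins_refl.
    by rewrite joinsC joins_refl.
  case: (K_H p) => [p_loop|[u u_p]]; first by have := K_loopless p; rewrite p_loop eqxx.
  exists u; apply: K_joins_uniq (xchooseP (psi_ex u)) _.
  by rewrite -(joins_mapE p chi u_p) !phiK joins_refl.
- exact: xchooseP (psi_ex d).
Qed.

Lemma K_minor_of_covered_by k (H : mgraph) : covered_by (K k) H -> mminor (K k) H.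
Proof.
have [n] := ubnP #|gE H|; elim: n H => // n IH H H_n K_H.
have dele_minor (d : gE H) : covered_by (K k) (dele d) -> mminor (K k) H.
  move=> /(IH (dele d) (leq_trans (card_sig_neq d) H_n)) [H' [dH' H'_K]].
  by exists H'; split=> //; apply: MR_step (MS_dele d) dH'.
case: (pickP (fun d : gE H => gsrc d == gtgt d)) => [d /eqP d_loop|H_loopless].
  exact: dele_minor (covered_by_dele_loop d_loop K_H).
case: (classic (exists d d' : gE H, d' != d /\ par d d')) => [[d [d' [d'_d dd']]]|H_simple].
  exact: dele_minor (covered_by_dele_twin d'_d dd' K_H).
exists H; split; first exact: MR_refl.
apply: miso_K_of_covered_by K_H => [d|d d' d_d']; first by rewrite H_loopless.
by apply/negP => dd'; apply: H_simple; exists d, d'; rewrite eq_sym.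
Qed.

Lemma PM_of_PSM t k : PSM t k -> PM t k.
Proof.
move=> t_k G G_loopless G_chi.
have tG_nnl : no_neg_loop (tilde G).
  by move=> [e b] /= e_loop; have := G_loopless e; rewrite e_loop.
have tG_chi : chib_ge (tilde G) t.
  move=> k' [c c_bal]; apply: G_chi; exists c => e; apply/eqP => ce.
  (* the two copies of [e] form a negative cycle of length 2 *)
  have := c_bal (c (gsrc e)) [:: (gsrc e, (e, false)); (gtgt e, (e, true))].
  rewrite /gcycle /neg_cycle /= /joins /= !eqxx !inE (negbTE (G_loopless e)) -ce eqxx /=.
  have copies_uniq : ((e, false) != (e, true)) && true && true.
    by rewrite !andbT xpair_eqE eqxx.
  by move/(_ copies_uniq isT).
have [S [GS S_K]] := t_k _ tG_nnl tG_chi.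
have tG_G : covered_by (ug (tilde G)) G.
  by exists id; split=> [|[e b]]; [exists id | right; exists e; apply: joins_refl].
have [H [GH S_H]] := covered_by_mreach (sreach_mreach GS) tG_G.
have K_H := covered_by_tilde (covered_by_miso S_H (siso_miso S_K)).
have [H' [HH' H'_K]] := K_minor_of_covered_by K_H.
by exists H'; split=> //; apply: mreach_trans GH HH'.
Qed.

(** * The parameters M, SM and OM *)

Lemma PSM_of_PM t m : PM t m -> PSM t m.
Proof.
move=> t_m G G_nnl G_chi.
have G_schi : switch_chi_ge G t by move=> k /switch_colorable_bcolorable; apply: G_chi.
have [S [U [GS S_U U_K]]] := tildeK_minor_of_switch_chi t_m G_nnl G_schi.
by exists S; split=> //; apply: siso_tilde S_U U_K.
Qed.

Lemma POM_double_of_PM t m : PM t m -> POM (2 * t) m.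
Proof.
move=> t_m G G_loopless G_chi.
have G_nnl : no_neg_loop (allneg G).
  by move=> e /eqP e_loop; have := G_loopless e; rewrite e_loop eqxx.
have [S [U [GS S_U U_K]]] := tildeK_minor_of_switch_chi t_m G_nnl (switch_chi_allneg G_chi).
have [S' [SS' S'_U]] := tilde_dele_all_pos S_U.
by exists S'; split; [apply: sreach_trans GS SS' | apply: siso_allneg S'_U U_K].
Qed.

Lemma PM_of_POM t k : POM t k -> PM t k.
Proof.
move=> t_k G G_loopless G_chi; have [S [GS S_K]] := t_k G G_loopless G_chi.
by exists (ug S); split; [apply: sreach_mreach GS | apply: siso_miso S_K].
Qed.

Lemma mreach_card (G G' : mgraph) : mreach G G' -> #|gV G'| <= #|gV G|.
Proof.
elim=> // A B C AB _ CB; apply: leq_trans CB _.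
by case: AB => [v|e|e] //=; rewrite card_sig max_card.
Qed.

Lemma chi_ge_K s : chi_ge (K s) s.
Proof.
move=> k [c c_proper]; rewrite -[s]card_ord -[k]card_ord.
apply: (@leq_card _ _ c) => x y cxy.
apply/eqP; apply: contraT => /K_joins_ex [p p_xy]; have := c_proper p.
by case/joinsP: p_xy => -[-> ->]; rewrite cxy eqxx.
Qed.

Lemma PM_le t k : PM t k -> k <= t.
Proof.
move=> t_k; have [G' [KG' [phi [psi [phi_bij _ _]]]]] := t_k _ (@K_loopless t) (@chi_ge_K t).
by have := mreach_card KG'; rewrite (bij_eq_card phi_bij) /= !card_ord.
Qed.

Lemma sreach_empty (S : sgraph) : exists S', sreach S S' /\ #|gV (ug S')| = 0.
Proof.
have [n] := ubnP #|gV (ug S)|; elim: n S => // n IH S S_n.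
case: (pickP (gV (ug S))) => [v _|S0]; last first.
  by exists S; split; [apply: SR_refl | apply: eq_card0].
have [S' [vS' S'0]] := IH (sdelv v) (leq_trans (card_sig_neq v) S_n).
by exists S'; split=> //; apply: SR_step (SS_delv v) vS'.
Qed.

Lemma siso_empty (S T : sgraph) : #|gV (ug S)| = 0 -> #|gV (ug T)| = 0 -> siso S T.
Proof.
move=> /card0_eq S0 /card0_eq T0.
have S_void (x : gV (ug S)) : False by have := S0 x; rewrite inE.
have T_void (y : gV (ug T)) : False by have := T0 y; rewrite inE.
exists (fun x => match S_void x with end), (fun e => match S_void (gsrc e) with end).
split; try by move=> e; case: (S_void (gsrc e)).
- by exists (fun y => match T_void y with end) => x; [case: (S_void x) | case: (T_void x)].
- exists (fun f => match T_void (gsrc f) with end) => e.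
    by case: (S_void (gsrc e)).
  by case: (T_void (gsrc e)).
Qed.

Lemma POM_0 t : POM t 0.
Proof.
move=> G _ _; have [S [GS S0]] := sreach_empty (allneg G).
by exists S; split=> //; apply: siso_empty; rewrite //= card_ord.
Qed.

Lemma is_max_ex (P : nat -> Prop) n : P 0 -> (forall k, P k -> k <= n) -> exists m, is_max P m.
Proof.
elim: n => [|n IH] P0 P_le.
  by exists 0; split=> // k /P_le; rewrite leqn0 => /eqP ->.
case: (classic (P n.+1)) => [Pn1|notPn1]; first by exists n.+1.
apply: IH => // k Pk; rewrite -ltnS ltn_neqAle P_le // andbT.
by apply: contra_not_neq notPn1 => <-.
Qed.

Unset Implicit Arguments.
Theorem theorem3p2 (t : nat) : 0 < t ->
  exists m om_t om_2t : nat,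
    [/\ is_max (PM t) m, is_max (PSM t) m,
        is_max (POM t) om_t, is_max (POM (2 * t)) om_2t &
        om_t <= m <= om_2t].
Proof.
move=> _.
have POM_bound s k : POM s k -> k <= s by move/PM_of_POM/PM_le.
have [m [t_m m_max]] := is_max_ex (PM_of_POM (@POM_0 t)) (@PM_le t).
have [o1 [t_o1 o1_max]] := is_max_ex (@POM_0 t) (POM_bound t).
have [o2 [t_o2 o2_max]] := is_max_ex (@POM_0 (2 * t)) (POM_bound (2 * t)).
exists m, o1, o2; split=> //.
- by split=> [|k /PM_of_PSM /m_max]; first exact: PSM_of_PM.
- by rewrite (m_max _ (PM_of_POM t_o1)) (o2_max _ (POM_double_of_PM t_m)).
Qed.
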